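(* Let $p\in R=A[t;\sigma,\delta]$ be monic of degree $n>1$, with companion matrix $C(p)\in M_n(A)$, and regard $R\subseteq M_n(A)[t;\sigma,\delta]$. The following are equivalent: (i) $t\in\mathrm{Idl}(Rp)$, i.e. $pt\in Rp$; (ii) for every $f\in R$: $f\in Rp$ if and only if $f(C(p))=0$; (iii) $p(C(p))=0$.
   Context: $A$ is a ring with $1$, $\sigma$ a unital ring endomorphism, $\delta$ a $\sigma$-derivation ($\delta$ additive, $\delta(ab)=\sigma(a)\delta(b)+\delta(a)b$); $R=A[t;\sigma,\delta]$ is the Ore extension with $ta=\sigma(a)t+\delta(a)$. $\sigma$ and $\delta$ are extended entrywise to $M_n(A)$, giving an endomorphism and a $\sigma$-derivation of $M_n(A)$, and $M_n(A)[t;\sigma,\delta]$ is the corresponding Ore extension; $A$ is embedded in $M_n(A)$ as scalar matrices, so $R\subseteq M_n(A)[t;\sigma,\delta]$. For a ring $S$ with $\sigma,\delta$, $f\in S[t;\sigma,\delta]$ and $c\in S$, $f(c)$ is the unique element of $S$ with $f-f(c)\in S[t;\sigma,\delta](t-c)$. For monic $p=t^n+a_{n-1}t^{n-1}+\dots+a_0$, $C(p)$ is its companion matrix (ones on the superdiagonal, last row $(-a_0,\dots,-a_{n-1})$, zeros elsewhere). $\mathrm{Idl}(Rp)=\{g\in R\mid pg\in Rp\}$. *)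

From HB Require Import structures.
From mathcomp Require Import all_boot all_order all_algebra.
Set Implicit Arguments.
Unset Strict Implicit.
Unset Printing Implicit Defensive.
Import GRing.Theory.
Local Open Scope ring_scope.

(* Elements of the Ore extension S[t; sg, dl] are represented by their
   (left) coefficient sequences  sum_i a_i t^i, i.e. as {poly S}; only the
   multiplication differs from the commutative one. *)

(* left multiplication by t:  t * (sum a_i t^i) = sum (sg a_i t^(i+1) + dl a_i t^i) *)
Definition ore_tmul (S : nzRingType) (sg dl : S -> S) (q : {poly S}) : {poly S} :=
  'X * map_poly sg q + map_poly dl q.

Definition ore_mul (S : nzRingType) (sg dl : S -> S) (f g : {poly S}) : {poly S} :=
  \sum_(i < size f) f`_i *: iter i (ore_tmul sg dl) g.

Definition in_left_ideal (S : nzRingType) (sg dl : S -> S) (q f : {poly S}) : Prop :=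
  exists g : {poly S}, f = ore_mul sg dl g q.

(* r is the (right) evaluation f(c): f - r lies in S[t;sg,dl] (t - c). *)
Definition is_ore_value (S : nzRingType) (sg dl : S -> S) (f : {poly S}) (c r : S) : Prop :=
  exists g : {poly S}, f - r%:P = ore_mul sg dl g ('X - c%:P).

(* companion matrix of a monic p of degree n.+2 (size n.+3) *)
Definition companion (A : nzRingType) (n : nat) (p : {poly A}) : 'M[A]_n.+2 :=
  \matrix_(i, j) (if j == i.+1 :> nat then 1
                  else if i == n.+1 :> nat then - p`_j else 0).

Definition scal_poly (A : nzRingType) (n : nat) (f : {poly A}) : {poly 'M[A]_n.+2} :=
  map_poly (fun a => a%:M) f.

From HB Require Import structures.
From mathcomp Require Import all_boot all_order all_algebra.
Import GRing.Theory.
Local Open Scope ring_scope.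
Set Implicit Arguments.
Unset Strict Implicit.
Unset Printing Implicit Defensive.

(* A map T on a left S-module V is (sg,dl)-pseudo-linear when it is additive
   and T(a v) = sg(a) T(v) + dl(a) v; then  f . v = sum_i f_i T^i(v)  makes V
   a left S[t;sg,dl]-module, i.e. (fg) . v = f . (g . v)  (ore_act_mul).
   Right division by monic polynomials then shows: if q . v = 0 and no
   nonzero polynomial of smaller degree kills v, the left ideal S[t] q is the
   annihilator of v (left_ideal_annihilator).  Two instances are used:
   - on S itself with T(w) = sg(w) c + dl(w), where 1 is killed exactly by
     S[t](t - c); so f(c) = 0 iff f . 1 = 0 (ore_value0E);
   - on row vectors A^(n+2) with T(v) = sg(v) C + dl(v), C the companion
     matrix of p; there e_0 is a cyclic vector with T^k(e_0) = e_k, so Rp is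
     the annihilator of e_0 (left_ideal_companion).
   For C, the first instance splits row by row into copies of the second, so
   f(C) = 0 iff f kills every e_i (companion_value0E).  The corollary follows:
   pt in Rp makes Rp kill every e_i = t^i e_0, and p(C) = 0 gives p e_1 = 0,
   i.e. pt kills e_0. *)

Lemma regular_scaleE (S : nzRingType) (a : S) (w : S^o) : a *: w = a * w.
Proof. by []. Qed.

Section OreAction.
Variables (S : nzRingType) (V : lmodType S) (sg dl : S -> S) (T : V -> V).

Definition ore_act (f : {poly S}) (v : V) : V :=
  \sum_(i < size f) f`_i *: iter i T v.

Lemma ore_act_widen N (f : {poly S}) v : (size f <= N)%N ->
  ore_act f v = \sum_(i < N) f`_i *: iter i T v.
Proof.
move=> le_fN; rewrite /ore_act (big_ord_widen N (fun i => f`_i *: iter i T v) le_fN).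
rewrite big_mkcond; apply: eq_bigr => i _; case: ltnP => // le_fi.
by rewrite nth_default // scale0r.
Qed.

Lemma ore_actDl (f g : {poly S}) v : ore_act (f + g) v = ore_act f v + ore_act g v.
Proof.
set N := maxn (size f) (size g).
rewrite (@ore_act_widen N (f + g)) ?(leq_trans (size_polyD _ _)) //.
rewrite (@ore_act_widen N f) ?leq_maxl // (@ore_act_widen N g) ?leq_maxr //.
by rewrite -big_split; apply: eq_bigr => i _; rewrite coefD scalerDl.
Qed.

Lemma ore_act0l v : ore_act 0 v = 0.
Proof. by rewrite /ore_act size_poly0 big_ord0. Qed.

Lemma ore_actC c v : ore_act c%:P v = c *: v.
Proof. by rewrite (@ore_act_widen 1) ?size_polyC ?leq_b1 // big_ord1 coefC. Qed.

Lemma ore_actX v : ore_act 'X v = T v.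
Proof.
by rewrite /ore_act size_polyX !big_ord_recl big_ord0 !coefX scale0r scale1r add0r addr0.
Qed.

Lemma ore_actZl a (f : {poly S}) v : ore_act (a *: f) v = a *: ore_act f v.
Proof.
rewrite (@ore_act_widen (size f)) ?size_scale_leq // /ore_act scaler_sumr.
by apply: eq_bigr => i _; rewrite coefZ scalerA.
Qed.

Hypotheses (sg0 : sg 0 = 0) (dl0 : dl 0 = 0).
Hypothesis T_add : {morph T : u w / u + w}.
Hypothesis T_pseudo : forall a w, T (a *: w) = sg a *: T w + dl a *: w.

Lemma pseudo_linear0 : T 0 = 0.
Proof. by apply: (addrI (T 0)); rewrite -T_add !addr0. Qed.

Lemma ore_act0r (f : {poly S}) : ore_act f 0 = 0.
Proof.
have iterT0 k : iter k T 0 = 0 by elim: k => //= k ->; rewrite pseudo_linear0.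
by rewrite /ore_act big1 // => i _; rewrite iterT0 scaler0.
Qed.

Lemma ore_act_tmul (g : {poly S}) v :
  ore_act (ore_tmul sg dl g) v = T (ore_act g v).
Proof.
rewrite /ore_tmul ore_actDl (@ore_act_widen (size g) (map_poly dl g)) ?size_poly //.
rewrite (@ore_act_widen (size g).+1 ('X * _)); last first.
  by rewrite (leq_trans (size_polyMleq _ _)) // size_polyX ltnS size_poly.
rewrite big_ord_recl coefXM scale0r add0r /ore_act (big_morph T T_add pseudo_linear0).
rewrite -big_split; apply: eq_bigr => i _ /=.
by rewrite coefXM !coef_map_id0 // T_pseudo.
Qed.

Lemma ore_act_mul (f g : {poly S}) v :
  ore_act (ore_mul sg dl f g) v = ore_act f (ore_act g v).
Proof.
have iter_tmul k h : ore_act (iter k (ore_tmul sg dl) h) v = iter k T (ore_act h v).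
  by elim: k => //= k IH; rewrite ore_act_tmul IH.
rewrite /ore_mul (big_morph (ore_act^~ v) (fun f g => ore_actDl f g v) (ore_act0l v)).
by apply: eq_bigr => i _; rewrite ore_actZl iter_tmul.
Qed.

End OreAction.

Section OreDivision.
Variables (S : nzRingType) (sg dl : S -> S).
Hypotheses (sg0 : sg 0 = 0) (sg1 : sg 1 = 1) (dl0 : dl 0 = 0).

Local Notation tmul := (ore_tmul sg dl).

(* The Ore product, being the action on V = S[t], is additive on the left. *)
Lemma ore_mulDl (f g h : {poly S}) :
  ore_mul sg dl (f + g) h = ore_mul sg dl f h + ore_mul sg dl g h.
Proof. exact: (@ore_actDl _ _ tmul). Qed.

Lemma ore_mul_monomial c k (h : {poly S}) :
  ore_mul sg dl (c *: 'X^k) h = c *: iter k tmul h.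
Proof.
rewrite [LHS](@ore_act_widen _ _ tmul k.+1); last first.
  by rewrite (leq_trans (size_scale_leq _ _)) // size_polyXn.
rewrite big_ord_recr /= big1 ?add0r; first by rewrite coefZ coefXn eqxx mulr1.
by move=> i _; rewrite coefZ coefXn (ltn_eqF (ltn_ord i)) mulr0 scale0r.
Qed.

Lemma ore_mul1l (h : {poly S}) : ore_mul sg dl 1 h = h.
Proof. by have := ore_mul_monomial 1 0 h; rewrite expr0 !scale1r. Qed.

(* Since sg 1 = 1, left multiplication by t maps monic polynomials of
   degree d to monic polynomials of degree d + 1. *)
Lemma tmul_monic (q : {poly S}) :
  q \is monic -> tmul q \is monic /\ size (tmul q) = (size q).+1.
Proof.
move=> /monicP lq; have sg_lq : sg (lead_coef q) != 0 by rewrite lq sg1 oner_neq0.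
have sgq_monic : map_poly sg q \is monic.
  by apply/monicP; rewrite lead_coef_map_id0 // lq.
have size_Xsgq : size ('X * map_poly sg q) = (size q).+1.
  by rewrite -commr_polyX size_mulX ?monic_neq0 // size_map_poly_id0.
have lt_dlq : (size (map_poly dl q) < size ('X * map_poly sg q)%R)%N.
  by rewrite size_Xsgq ltnS size_poly.
rewrite /ore_tmul (size_polyDl lt_dlq) size_Xsgq; split => //.
by apply/monicP; rewrite (lead_coefDl lt_dlq); apply/monicP; rewrite monicMl ?monicX.
Qed.

Lemma iter_tmul_monic k (q : {poly S}) : q \is monic ->
  iter k tmul q \is monic /\ size (iter k tmul q) = (size q + k)%N.
Proof.
move=> q_monic; elim: k => [|k [mk sk]] /=; first by rewrite addn0.
by have [-> ->] := tmul_monic mk; rewrite sk addnS.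
Qed.

Lemma ore_div (q : {poly S}) m : q \is monic -> size q = m.+1 ->
  forall f : {poly S}, exists g r, f = ore_mul sg dl g q + r /\ (size r <= m)%N.
Proof.
move=> q_monic size_q f; elim: {f}(size f) {-2}f (leqnn (size f)) => [|N IH] f le_fN.
  by exists 0, f; rewrite /ore_mul size_poly0 big_ord0 add0r (leq_trans le_fN).
have [le_f_m|lt_m_f] := leqP (size f) m.
  by exists 0, f; rewrite /ore_mul size_poly0 big_ord0 add0r.
have [le_fN'|lt_Nf] := leqP (size f) N; first exact: IH.
have size_f : size f = N.+1 by apply/eqP; rewrite eqn_leq le_fN.
have le_mN : (m <= N)%N by rewrite -ltnS -size_f.
have [H_monic size_H] := iter_tmul_monic (N - m) q_monic.
set H := iter _ tmul q in H_monic size_H.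
rewrite size_q addSn subnKC // in size_H.
set c := f`_N.
have [|g [r [def_f le_rm]]] := IH (f - c *: H).
  apply/leq_sizeP => j le_Nj; rewrite coefB coefZ.
  case: (ltngtP N j) le_Nj => // [lt_Nj|<-] _.
    by rewrite !nth_default ?mulr0 ?subr0 // ?size_f ?size_H.
  by move/monicP: H_monic; rewrite lead_coefE size_H => ->; rewrite mulr1 subrr.
exists (g + c *: 'X^(N - m)), r; split => //.
by rewrite ore_mulDl ore_mul_monomial -/H -[f](subrK (c *: H)) def_f addrAC.
Qed.

Section Annihilator.
Variables (V : lmodType S) (T : V -> V).
Hypothesis T_add : {morph T : u w / u + w}.
Hypothesis T_pseudo : forall a w, T (a *: w) = sg a *: T w + dl a *: w.

Lemma left_ideal_annihilator (q : {poly S}) m (v : V) :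
  q \is monic -> size q = m.+1 -> ore_act T q v = 0 ->
  (forall r : {poly S}, (size r <= m)%N -> ore_act T r v = 0 -> r = 0) ->
  forall f, in_left_ideal sg dl q f <-> ore_act T f v = 0.
Proof.
move=> q_monic size_q qv0 v_free f; split => [[g ->]|fv0].
  by rewrite ore_act_mul // qv0 ore_act0r.
have [g [r [def_f le_rm]]] := ore_div q_monic size_q f.
exists g; rewrite def_f (v_free r) ?addr0 //.
by move: fv0; rewrite def_f ore_actDl ore_act_mul // qv0 ore_act0r // add0r.
Qed.

End Annihilator.
End OreDivision.

Section SkewEvaluation.
Variables (S : nzRingType) (sg : {rmorphism S -> S}) (dl : S -> S).
Hypothesis dl_add : {morph dl : a b / a + b}.
Hypothesis dl_mul : forall a b, dl (a * b) = sg a * dl b + dl a * b.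

Lemma derivation0 : dl 0 = 0.
Proof. by apply: (addrI (dl 0)); rewrite -dl_add !addr0. Qed.

Lemma derivation1 : dl 1 = 0.
Proof. by apply: (addrI (dl 1)); rewrite addr0 -{3}[1]mulr1 dl_mul rmorph1 mul1r mulr1. Qed.

Variable c : S.

(* The pseudo-linear map  w |-> sg(w) c + dl(w)  on the regular module S;
   it describes left multiplication by t on S[t] / S[t](t - c). *)
Definition eval_shift (w : S^o) : S^o := sg w * c + dl w.

Lemma eval_shift_add : {morph eval_shift : u w / u + w}.
Proof. by move=> u w; rewrite /eval_shift rmorphD dl_add mulrDl addrACA. Qed.

Lemma eval_shift_pseudo a (w : S^o) :
  eval_shift (a *: w) = sg a *: eval_shift w + dl a *: w.
Proof.
rewrite !regular_scaleE /eval_shift rmorphM dl_mul mulrDr -mulrA addrA.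
by congr (_ + _).
Qed.

Lemma ore_value0E (f : {poly S}) :
  is_ore_value sg dl f c 0 <-> ore_act eval_shift f 1 = 0.
Proof.
have Xc1 : ore_act eval_shift ('X - c%:P) 1 = 0.
  rewrite -polyCN ore_actDl ore_actX ore_actC regular_scaleE /eval_shift.
  by rewrite rmorph1 derivation1 mul1r mulr1 addr0 subrr.
apply: (@iff_trans _ (in_left_ideal sg dl ('X - c%:P) f)).
  by rewrite /is_ore_value polyC0 subr0.
apply: (left_ideal_annihilator (rmorph0 sg) (rmorph1 sg) derivation0
  eval_shift_add eval_shift_pseudo (monicXsubC c) (size_XsubC c) Xc1).
by move=> r /size1_polyC ->; rewrite ore_actC regular_scaleE mulr1 => ->.
Qed.

End SkewEvaluation.

Section MatrixDerivation.
Variables (A : nzRingType) (sg : {rmorphism A -> A}) (dl : A -> A).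
Hypothesis dl_add : {morph dl : a b / a + b}.
Hypothesis dl_mul : forall a b, dl (a * b) = sg a * dl b + dl a * b.

Lemma map_mx_derivation_add {m k} :
  {morph map_mx dl : u w / u + w >-> u + w :> 'M[A]_(m, k)}.
Proof. by move=> u w; apply/matrixP => i j; rewrite !mxE dl_add. Qed.

Lemma map_mx_derivation_mul {k} (u w : 'M[A]_k.+1) :
  map_mx dl (u * w) = map_mx sg u * map_mx dl w + map_mx dl u * w.
Proof.
rewrite -!mulmxE; apply/matrixP => i j.
rewrite !mxE (big_morph dl dl_add (derivation0 dl_add)) -big_split.
by apply: eq_bigr => l _; rewrite !mxE dl_mul.
Qed.

End MatrixDerivation.

Section Companion.
Variables (A : nzRingType) (sg : {rmorphism A -> A}) (dl : A -> A).
Hypothesis dl_add : {morph dl : a b / a + b}.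
Hypothesis dl_mul : forall a b, dl (a * b) = sg a * dl b + dl a * b.
Variables (n : nat) (p : {poly A}).
Hypotheses (p_monic : p \is monic) (p_size : size p = n.+3).

Local Notation C := (companion n p).
Let dl0 : dl 0 = 0 := derivation0 dl_add.
Let dl1 : dl 1 = 0 := derivation1 dl_mul.

(* Left multiplication by t on R / Rp, in the basis 1, t, ..., t^(n+1) of
   row vectors: v |-> sg(v) C + dl(v). *)
Definition companion_shift (v : 'rV[A]_n.+2) : 'rV[A]_n.+2 :=
  map_mx sg v *m C + map_mx dl v.

Lemma companion_shift_add : {morph companion_shift : u w / u + w}.
Proof.
by move=> u w; rewrite /companion_shift map_mx_derivation_add // map_mxD mulmxDl addrACA.
Qed.

Lemma companion_shift_pseudo a v :
  companion_shift (a *: v) = sg a *: companion_shift v + dl a *: v.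
Proof.
rewrite /companion_shift map_mxZ -scalemxAl scalerDr -addrA; congr (_ + _).
by apply/matrixP => i j; rewrite !mxE dl_mul.
Qed.

Lemma companion_shift_delta (i : 'I_n.+2) : companion_shift 'e_i = row i C.
Proof.
rewrite /companion_shift map_delta_mx rowE.
have -> : map_mx dl ('e_i : 'rV[A]_n.+2) = 0.
  by apply/matrixP => a b; rewrite !mxE; case: (_ && _); rewrite ?dl1 ?dl0.
by rewrite addr0.
Qed.

Lemma companion_row (i : 'I_n.+2) : (i < n.+1)%N -> row i C = 'e_(inord i.+1).
Proof.
move=> lt_in; apply/rowP => j; rewrite !mxE (ltn_eqF lt_in) eqxx /=.
by rewrite -val_eqE /= inordK //; case: (j == i.+1 :> nat).
Qed.

Lemma companion_row_last : row ord_max C = - \row_(j < n.+2) p`_j.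
Proof. by apply/rowP => j; rewrite !mxE (ltn_eqF (ltn_ord j)) eqxx. Qed.

Lemma companion_shift_iter k : (k < n.+2)%N ->
  iter k companion_shift 'e_0 = 'e_(inord k).
Proof.
elim: k => [|k IH] lt_kn; first by congr (delta_mx _ _); apply: val_inj; rewrite /= inordK.
have lt_k : (k < n.+2)%N := ltnW lt_kn.
by rewrite /= IH // companion_shift_delta companion_row ?inordK.
Qed.

Local Notation T := companion_shift.

Let T_act0 (f : {poly A}) : ore_act T f 0 = 0 := ore_act0r companion_shift_add f.
Let T_act_mul (f g : {poly A}) v :
  ore_act T (ore_mul sg dl f g) v = ore_act T f (ore_act T g v) :=
  ore_act_mul (rmorph0 sg) dl0 companion_shift_add companion_shift_pseudo f g v.

Lemma companion_coefficients (r : {poly A}) :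
  \sum_(i < n.+2) r`_i *: iter i T 'e_0 = \row_(j < n.+2) r`_j.
Proof.
rewrite [RHS]row_sum_delta; apply: eq_bigr => i _.
by rewrite companion_shift_iter // inord_val mxE.
Qed.

Lemma ore_act_coefficients (r : {poly A}) : (size r <= n.+2)%N ->
  ore_act T r 'e_0 = \row_(j < n.+2) r`_j.
Proof. by move=> le_rn; rewrite (ore_act_widen _ _ le_rn) companion_coefficients. Qed.

Lemma ore_act_companion_poly : ore_act T p 'e_0 = 0.
Proof.
have p_lead : p`_n.+2 = 1 by move/monicP: p_monic; rewrite lead_coefE p_size.
have last_unit : (inord n.+1 : 'I_n.+2) = ord_max by apply: val_inj; rewrite /= inordK.
have iter_last : iter n.+2 T 'e_0 = - \row_(j < n.+2) p`_j.
  by rewrite iterS companion_shift_iter // companion_shift_delta last_unit companion_row_last.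
rewrite (@ore_act_widen _ _ _ n.+3) ?p_size // big_ord_recr /= -/(iter n.+2 T 'e_0).
by rewrite companion_coefficients p_lead scale1r iter_last subrr.
Qed.

Lemma left_ideal_companion (f : {poly A}) :
  in_left_ideal sg dl p f <-> ore_act T f 'e_0 = 0.
Proof.
apply: (left_ideal_annihilator (rmorph0 sg) (rmorph1 sg) dl0 companion_shift_add
  companion_shift_pseudo p_monic p_size ore_act_companion_poly).
move=> r le_rn; rewrite ore_act_coefficients // => /rowP r0.
apply/polyP => j; rewrite coef0; have [lt_jn|le_nj] := ltnP j n.+2.
  by have := r0 (Ordinal lt_jn); rewrite !mxE.
by rewrite nth_default // (leq_trans le_rn).
Qed.

Local Notation sgM := (map_mx sg : {rmorphism 'M[A]_n.+2 -> 'M[A]_n.+2}).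
Local Notation dlM := (map_mx dl : 'M[A]_n.+2 -> 'M[A]_n.+2).
Local Notation shiftC := (eval_shift sgM dlM C).

(* Evaluation at C works row by row: each row of M_n(A) is a copy of R / Rp. *)
Lemma row_eval_shift (w : 'M[A]_n.+2) i : row i (shiftC w) = T (row i w).
Proof.
rewrite /eval_shift /companion_shift -mulmxE; apply/rowP => j; rewrite !mxE.
by congr (_ + _); apply: eq_bigr => k _; rewrite !mxE.
Qed.

Lemma row_ore_act (f : {poly A}) (w : 'M[A]_n.+2) i :
  row i (ore_act shiftC (scal_poly n f) w) = ore_act T f (row i w).
Proof.
have row_iter k : row i (iter k shiftC w) = iter k T (row i w).
  by elim: k => //= k IH; rewrite row_eval_shift IH.
rewrite (ore_act_widen _ _ (size_poly _ _)) /ore_act linear_sum.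
apply: eq_bigr => k _; rewrite coef_map_id0 ?raddf0 //.
by rewrite regular_scaleE -mulmxE mul_scalar_mx linearZ /= row_iter.
Qed.

Lemma companion_value0E (f : {poly A}) :
  is_ore_value sgM dlM (scal_poly n f) C 0 <-> forall i, ore_act T f 'e_i = 0.
Proof.
apply: (iff_trans (ore_value0E (map_mx_derivation_add dl_add)
  (map_mx_derivation_mul dl_add dl_mul) C (scal_poly n f))).
split => [f1_0 i|fe_0]; first by rewrite -row1 -row_ore_act f1_0 row0.
by apply/row_matrixP => i; rewrite row_ore_act row1 fe_0 row0.
Qed.

Lemma left_ideal_annihilates_basis :
  in_left_ideal sg dl p (ore_mul sg dl p 'X) ->
  forall f, in_left_ideal sg dl p f -> forall i, ore_act T f 'e_i = 0.
Proof.
move=> [g pX_def] f [h ->] i; rewrite T_act_mul.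
suff -> : ore_act T p 'e_i = 0 by rewrite T_act0.
rewrite -(inord_val i) -companion_shift_iter //.
elim: (nat_of_ord i) (ltn_ord i) => [|k IH] lt_kn; first exact: ore_act_companion_poly.
by rewrite /= -(ore_actX T) -T_act_mul pX_def T_act_mul IH ?T_act0 // ltnW.
Qed.

Lemma left_ideal_pXE :
  in_left_ideal sg dl p (ore_mul sg dl p 'X) <-> ore_act T p 'e_(inord 1) = 0.
Proof.
rewrite -companion_shift_iter //; apply: (iff_trans (left_ideal_companion _)).
by rewrite T_act_mul ore_actX.
Qed.

End Companion.

Theorem corollary1p12 (A : nzRingType) (sg : {rmorphism A -> A}) (dl : A -> A)
  (dl_add : forall a b, dl (a + b) = dl a + dl b)
  (dl_mul : forall a b, dl (a * b) = sg a * dl b + dl a * b)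
  (n : nat) (p : {poly A}) (p_monic : p \is monic) (p_size : size p = n.+3) :
  let C := companion n p in
  let sgM := map_mx sg : 'M[A]_n.+2 -> 'M[A]_n.+2 in
  let dlM := map_mx dl : 'M[A]_n.+2 -> 'M[A]_n.+2 in
  let evalC_zero (f : {poly A}) := is_ore_value sgM dlM (scal_poly n f) C 0 in
  [<-> in_left_ideal sg dl p (ore_mul sg dl p 'X);
        forall f, in_left_ideal sg dl p f <-> evalC_zero f;
        evalC_zero p].
Proof.
move=> C sgM dlM evalC_zero.
have idealE := left_ideal_companion dl_add dl_mul p_monic p_size.
have evalE := companion_value0E dl_add dl_mul n p.
tfae.
- move=> pX_in f; split => [f_in|/evalE fe_0]; last exact/idealE/fe_0.
  by apply/evalE => i; apply: left_ideal_annihilates_basis.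
- by move=> ideal_iff_eval; apply/ideal_iff_eval; exists 1; rewrite ore_mul1l.
- by move/evalE => pe_0; apply/(left_ideal_pXE dl_add dl_mul p_monic p_size).
Qed.
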